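(* Let $0<p<1/2$, let $m$ be a bounded generating sequence, and let $\varphi:\mathbb{N}\to[1,\infty)$ be a nondecreasing function such that $$\limsup_{n\to\infty}\frac{(n+1)^{1/p-2}}{\varphi(n)}=+\infty.$$ Then $$\sup_{f\in H_p(G_m),\ \|f\|_{H_p}\le 1}\ \sup_{n\in\mathbb{N}_+}\Big\|\frac{\sigma_nf}{\varphi(n)}\Big\|_{L_{p,\infty}(G_m)}=\infty .$$ In particular the maximal operator $f\mapsto\sup_{n}|\sigma_nf|/\varphi(n)$ is not bounded from $H_p(G_m)$ to $L_{p,\infty}(G_m)$.
   Context: Let $m=(m_0,m_1,\dots)$ be a sequence of integers $m_k\ge 2$ with $\sup_k m_k<\infty$ (bounded Vilenkin group). $Z_{m_k}=\{0,1,\dots,m_k-1\}$ is the additive group of integers mod $m_k$, and $G_m=\prod_k Z_{m_k}$ is the complete direct product, with elements $x=(x_0,x_1,\dots)$, $x_k\in Z_{m_k}$, product topology, and Haar measure $\mu$ = product of the uniform measures $\mu_k(\{j\})=1/m_k$. Set $M_0=1$, $M_{k+1}=m_kM_k$; every $n\in\mathbb{N}$ is uniquely $n=\sum_j n_jM_j$ with $n_j\in Z_{m_j}$. For $n\ge1$, $I_n(x)=\{y\in G_m: y_j=x_j,\ j<n\}$, $I_0(x)=G_m$. The generalized Rademacher functions are $r_k(x)=\exp(2\pi i x_k/m_k)$ and the Vilenkin system is $\psi_n=\prod_k r_k^{n_k}$. $\digamma_n$ is the $\sigma$-algebra generated by the intervals $I_n(x)$. A martingale $f=(f^{(n)})$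 is with respect to $(\digamma_n)$; $f^*=\sup_n|f^{(n)}|$, and $H_p(G_m)$ consists of martingales with $\|f\|_{H_p}:=\|f^*\|_{L_p}<\infty$. Fourier coefficients of a martingale are $\widehat f(i)=\lim_{k\to\infty}\int_{G_m}f^{(k)}\overline{\psi_i}\,d\mu$; $S_nf=\sum_{k=0}^{n-1}\widehat f(k)\psi_k$ ($S_0f=0$), $\sigma_nf=\frac1n\sum_{k=0}^{n-1}S_kf$. The weak space $L_{p,\infty}(G_m)$ has quasinorm $\|g\|_{L_{p,\infty}}=\big(\sup_{\lambda>0}\lambda^p\mu(|g|>\lambda)\big)^{1/p}$. *)

(* Vilenkin groups encoded concretely via finite-level cylinder sums. *)
From Stdlib Require Import Reals Lra Lia Arith.
Open Scope R_scope.

Definition Cx := (R * R)%type.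
Definition C0 : Cx := (0, 0).
Definition C1 : Cx := (1, 0).
Definition Cadd (z w : Cx) : Cx := (fst z + fst w, snd z + snd w).
Definition Cmul (z w : Cx) : Cx :=
  (fst z * fst w - snd z * snd w, fst z * snd w + snd z * fst w).
Definition Cconj (z : Cx) : Cx := (fst z, - snd z).
Definition Cscal (a : R) (z : Cx) : Cx := (a * fst z, a * snd z).
Definition Cabs (z : Cx) : R := sqrt (fst z ^ 2 + snd z ^ 2).
Definition Cexpi (t : R) : Cx := (cos t, sin t).

Fixpoint Csum (n : nat) (g : nat -> Cx) : Cx :=
  match n with O => C0 | S k => Cadd (Csum k g) (g k) end.
Fixpoint Cprod (n : nat) (g : nat -> Cx) : Cx :=
  match n with O => C1 | S k => Cmul (Cprod k g) (g k) end.
Fixpoint Cpow (z : Cx) (n : nat) : Cx :=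
  match n with O => C1 | S k => Cmul (Cpow z k) z end.
Fixpoint Rsum (n : nat) (g : nat -> R) : R :=
  match n with O => 0 | S k => Rsum k g + g k end.
Fixpoint natprod (n : nat) (g : nat -> nat) : nat :=
  match n with O => 1%nat | S k => (natprod k g * g k)%nat end.
Fixpoint Rmaxupto (N : nat) (g : nat -> R) : R :=
  match N with O => g O | S k => Rmax (Rmaxupto k g) (g (S k)) end.

Definition rpow (x p : R) : R := if Rle_dec x 0 then 0 else Rpower x p.

Definition bounded_generating (m : nat -> nat) : Prop :=
  (forall k, (2 <= m k)%nat) /\ (exists B, forall k, (m k <= B)%nat).

Definition Mk (m : nat -> nat) (k : nat) : nat := natprod k m.

(* n_j in n = sum_j n_j M_j *)
Definition digit (m : nat -> nat) (n j : nat) : nat :=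
  Nat.modulo (Nat.div n (Mk m j)) (m j).

(* elements of G_m: sequences x with x_k in Z_{m_k} *)
Definition Gpoint (m : nat -> nat) (x : nat -> nat) : Prop := forall k, (x k < m k)%nat.

Definition rad (m : nat -> nat) (k : nat) (x : nat -> nat) : Cx :=
  Cexpi (2 * PI * INR (x k) / INR (m k)).
(* psi_n = prod_k r_k^{n_k}; n_k = 0 for k > n since M_k >= 2^k *)
Definition psi (m : nat -> nat) (n : nat) (x : nat -> nat) : Cx :=
  Cprod (S n) (fun k => Cpow (rad m k x) (digit m n k)).

(* the point of G_m whose coordinates are the digits of i; for i < M_N
   these run over the representatives of the cosets I_N *)
Definition pt (m : nat -> nat) (i : nat) : nat -> nat := fun k => digit m i k.

Definition measurable_at {A : Type} (m : nat -> nat) (N : nat) (g : (nat -> nat) -> A) : Prop :=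
  forall x y, Gpoint m x -> Gpoint m y -> (forall k, (k < N)%nat -> x k = y k) -> g x = g y.

(* Haar integral of an F_N-measurable function *)
Definition lint (m : nat -> nat) (N : nat) (g : (nat -> nat) -> R) : R :=
  Rsum (Mk m N) (fun i => g (pt m i)) / INR (Mk m N).
Definition Cint (m : nat -> nat) (N : nat) (g : (nat -> nat) -> Cx) : Cx :=
  Cscal (/ INR (Mk m N)) (Csum (Mk m N) (fun i => g (pt m i))).
(* Haar measure of {h > lam} for an F_N-measurable real h *)
Definition mu_gt (m : nat -> nat) (N : nat) (h : (nat -> nat) -> R) (lam : R) : R :=
  Rsum (Mk m N) (fun i => if Rlt_dec lam (h (pt m i)) then 1 else 0) / INR (Mk m N).

Definition upd (x : nat -> nat) (n j : nat) : nat -> nat :=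
  fun k => if Nat.eqb k n then j else x k.

Definition martingale (m : nat -> nat) (f : nat -> (nat -> nat) -> Cx) : Prop :=
  (forall n, measurable_at m n (f n)) /\
  (forall n x, Gpoint m x ->
     f n x = Cscal (/ INR (m n)) (Csum (m n) (fun j => f (S n) (upd x n j)))).

(* ||f||_{H_p} <= B  <->  int (fstar)^p <= B^p, and by monotone convergence
   int (sup_n |f^(n)|)^p = sup_N int (max_{n<=N} |f^(n)|)^p *)
Definition Hp_norm_le (m : nat -> nat) (p : R) (f : nat -> (nat -> nat) -> Cx) (B : R) : Prop :=
  forall N, lint m N (fun x => rpow (Rmaxupto N (fun n => Cabs (f n x))) p) <= rpow B p.

(* Fourier coefficients: lim_k int f^(k) conj(psi_i); the sequence is constant
   for k >= i+1 (martingale property, psi_i is F_{i+1}-measurable) *)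
Definition fhat (m : nat -> nat) (f : nat -> (nat -> nat) -> Cx) (i : nat) : Cx :=
  Cint m (S i) (fun x => Cmul (f (S i) x) (Cconj (psi m i x))).

Definition Spart (m : nat -> nat) (f : nat -> (nat -> nat) -> Cx) (n : nat) (x : nat -> nat) : Cx :=
  Csum n (fun k => Cmul (fhat m f k) (psi m k x)).

Definition Fsigma (m : nat -> nat) (f : nat -> (nat -> nat) -> Cx) (n : nat) (x : nat -> nat) : Cx :=
  Cscal (/ INR n) (Csum n (fun k => Spart m f k x)).

(* ||h||_{L_{p,oo}} > B (B > 0) for an F_N-measurable h :
   sup_{lam>0} lam^p mu(|h| > lam) > B^p *)
Definition weak_norm_gt (m : nat -> nat) (p : R) (N : nat) (h : (nat -> nat) -> R) (B : R) : Prop :=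
  exists lam, 0 < lam /\ rpow lam p * mu_gt m N (fun x => Rabs (h x)) lam > rpow B p.

(* The counterexample is a single atom. For M := M_N and c := M^(1/p) let f be c on
   {x in I_N(0) : x_N = 0}, -c on {x in I_N(0) : x_N = 1} and 0 elsewhere; then
   ||f||_{H_p}^p = 2/m_N <= 1. As f has mean zero on I_N(0), its Fourier coefficients vanish
   below M, while Re f^(M) = c (1 - cos(2 pi/m_N)) / (m_N M). Hence sigma_(M+2) f equals
   f^(M) psi_M / (M+2), whose modulus is constant and of order M^(1/p-2), so the weak norm of
   sigma_(M+2) f / phi(M+2) is of order M^(1/p-2) / phi(M+2). Since m is bounded, consecutive
   M_N have bounded ratios, and as phi is nondecreasing the limsup hypothesis along all n
   transfers to the subsequence n = M_N + 2. *)

From Pilot Require Import Defs.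
From Stdlib Require Import Reals Lra Lia Arith.
Open Scope R_scope.

Lemma Cext (z w : Cx) : fst z = fst w -> snd z = snd w -> z = w.
Proof. apply injective_projections. Qed.

Lemma Csum_fst n g : fst (Csum n g) = Rsum n (fun k => fst (g k)).
Proof. induction n as [|n IH]; simpl; [reflexivity | now rewrite IH]. Qed.

Lemma Csum_snd n g : snd (Csum n g) = Rsum n (fun k => snd (g k)).
Proof. induction n as [|n IH]; simpl; [reflexivity | now rewrite IH]. Qed.

Lemma Rsum_ext n f g : (forall k, (k < n)%nat -> f k = g k) -> Rsum n f = Rsum n g.
Proof.
  induction n as [|n IH]; intros Hfg; simpl; [reflexivity|].
  rewrite IH by (intros; apply Hfg; lia); rewrite Hfg by lia; reflexivity.
Qed.

Lemma Rsum_add n k g : Rsum (n + k) g = Rsum n g + Rsum k (fun j => g (n + j)%nat).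
Proof.
  induction k as [|k IH]; simpl; [rewrite Nat.add_0_r; ring|].
  rewrite Nat.add_succ_r; simpl; rewrite IH; ring.
Qed.

Lemma Rsum_const n a : Rsum n (fun _ => a) = INR n * a.
Proof. induction n as [|n IH]; simpl Rsum; [simpl; ring | rewrite IH, S_INR; ring]. Qed.

Lemma Rsum_eq0 n g : (forall k, (k < n)%nat -> g k = 0) -> Rsum n g = 0.
Proof. intros H; rewrite (Rsum_ext n g (fun _ => 0)), Rsum_const by auto; ring. Qed.

Lemma Rsum_mul_blocks a b F :
  Rsum (b * a) F = Rsum b (fun q => Rsum a (fun r => F (q * a + r)%nat)).
Proof.
  induction b as [|b IH]; simpl; [reflexivity|].
  now rewrite Nat.add_comm, Rsum_add, IH.
Qed.

Lemma Rsum_first n v : (0 < n)%nat -> Rsum n (fun r => if Nat.eqb r 0 then v else 0) = v.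
Proof.
  intros Hn; replace n with (1 + (n - 1))%nat by lia.
  rewrite Rsum_add, (Rsum_eq0 (n - 1)) by reflexivity; simpl; ring.
Qed.

Lemma Rsum_first_two n F :
  (2 <= n)%nat -> (forall d, (2 <= d)%nat -> F d = 0) -> Rsum n F = F 0%nat + F 1%nat.
Proof.
  intros Hn HF; replace n with (2 + (n - 2))%nat by lia.
  rewrite Rsum_add, (Rsum_eq0 (n - 2)) by (intros; apply HF; lia); simpl; ring.
Qed.

Lemma Csum_first_two n F :
  (2 <= n)%nat -> (forall d, (2 <= d)%nat -> F d = C0) ->
  Csum n F = Cadd (F 0%nat) (F 1%nat).
Proof.
  intros Hn HF; apply Cext; rewrite ?Csum_fst, ?Csum_snd;
    rewrite Rsum_first_two by (auto; intros d Hd; now rewrite HF); reflexivity.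
Qed.

Lemma Csum_ext n f g : (forall k, (k < n)%nat -> f k = g k) -> Csum n f = Csum n g.
Proof.
  induction n as [|n IH]; intros Hfg; simpl; [reflexivity|].
  rewrite IH by (intros; apply Hfg; lia); rewrite Hfg by lia; reflexivity.
Qed.

Lemma Csum_eq0 n g : (forall k, (k < n)%nat -> g k = C0) -> Csum n g = C0.
Proof.
  intros Hg; apply Cext; rewrite ?Csum_fst, ?Csum_snd;
    apply Rsum_eq0; intros k Hk; now rewrite Hg.
Qed.

Lemma Cabs_mul z w : Cabs (Cmul z w) = Cabs z * Cabs w.
Proof.
  destruct z as [a b], w as [c d]; unfold Cabs, Cmul; simpl.
  rewrite <- sqrt_mult by nra; f_equal; ring.
Qed.

Lemma Cabs_scal a z : Cabs (Cscal a z) = Rabs a * Cabs z.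
Proof.
  destruct z as [x y]; unfold Cabs, Cscal; simpl.
  rewrite <- sqrt_Rsqr_abs, <- sqrt_mult by (unfold Rsqr; nra); f_equal; unfold Rsqr; ring.
Qed.

Lemma Cabs_real r : Cabs (r, 0) = Rabs r.
Proof. unfold Cabs; simpl; rewrite <- sqrt_Rsqr_abs; f_equal; unfold Rsqr; ring. Qed.

Lemma Cabs_C0 : Cabs C0 = 0.
Proof. unfold C0; rewrite Cabs_real; apply Rabs_R0. Qed.

Lemma Cabs_nonneg z : 0 <= Cabs z.
Proof. apply sqrt_pos. Qed.

Lemma Cabs_fst_le z : Rabs (fst z) <= Cabs z.
Proof.
  destruct z as [a b]; unfold Cabs; simpl; rewrite <- sqrt_Rsqr_abs.
  apply sqrt_le_1_alt; unfold Rsqr; nra.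
Qed.

Lemma Cabs_Cpow z n : Cabs (Cpow z n) = Cabs z ^ n.
Proof.
  induction n as [|n IH]; simpl; [|rewrite Cabs_mul, IH; ring].
  unfold Defs.C1; rewrite Cabs_real; apply Rabs_R1.
Qed.

Lemma Cabs_Cexpi t : Cabs (Cexpi t) = 1.
Proof.
  unfold Cabs, Cexpi; simpl fst; simpl snd.
  replace (cos t ^ 2 + sin t ^ 2) with 1 by (rewrite <- (sin2_cos2 t); unfold Rsqr; ring).
  apply sqrt_1.
Qed.

Lemma Cabs_psi m n x : Cabs (psi m n x) = 1.
Proof.
  unfold psi; generalize (S n); intros k; induction k as [|k IH]; simpl.
  - unfold Defs.C1; rewrite Cabs_real; apply Rabs_R1.
  - rewrite Cabs_mul, IH, Cabs_Cpow; unfold rad; rewrite Cabs_Cexpi, pow1; ring.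
Qed.

Lemma Cexpi_0 : Cexpi 0 = Defs.C1.
Proof. unfold Cexpi; now rewrite cos_0, sin_0. Qed.

Lemma Cmul_C1_l z : Cmul Defs.C1 z = z.
Proof. apply Cext; unfold Cmul, Defs.C1; simpl; ring. Qed.

Lemma Cmul_C1_r z : Cmul z Defs.C1 = z.
Proof. apply Cext; unfold Cmul, Defs.C1; simpl; ring. Qed.

Lemma Cpow_C1 n : Cpow Defs.C1 n = Defs.C1.
Proof. induction n as [|n IH]; simpl; [reflexivity | now rewrite IH, Cmul_C1_l]. Qed.

Lemma Cadd_C0_l z : Cadd C0 z = z.
Proof. apply Cext; unfold Cadd, C0; simpl; ring. Qed.

Lemma Cscal_avg_const (a : nat) z : (0 < a)%nat -> Cscal (/ INR a) (Csum a (fun _ => z)) = z.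
Proof.
  intros Ha; assert (INR a <> 0) by (apply not_0_INR; lia).
  apply Cext; unfold Cscal; simpl; rewrite ?Csum_fst, ?Csum_snd, Rsum_const; field; auto.
Qed.

Lemma rpow_0 p : rpow 0 p = 0.
Proof. unfold rpow; destruct (Rle_dec 0 0); [reflexivity | lra]. Qed.

Lemma rpow_1 p : rpow 1 p = 1.
Proof.
  unfold rpow, Rpower; destruct (Rle_dec 1 0); [lra|].
  now rewrite ln_1, Rmult_0_r, exp_0.
Qed.

Lemma rpow_pos x p : 0 < x -> rpow x p = Rpower x p.
Proof. intros Hx; unfold rpow; destruct (Rle_dec x 0); [lra | reflexivity]. Qed.

Lemma Rmaxupto_le K g a : (forall n, (n <= K)%nat -> g n <= a) -> Rmaxupto K g <= a.
Proof.
  induction K as [|K IH]; intros H; simpl; [apply H; lia|].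
  apply Rmax_lub; [apply IH; intros; apply H; lia | apply H; lia].
Qed.

Lemma Rmaxupto_last K g : (forall n, (n <= K)%nat -> g n <= g K) -> Rmaxupto K g = g K.
Proof.
  intros H; destruct K as [|K]; [reflexivity|]; simpl.
  apply Rmax_right, Rmaxupto_le; intros n Hn; apply H; lia.
Qed.

Fixpoint in_I0 (N : nat) (x : nat -> nat) : bool :=
  match N with O => true | S k => in_I0 k x && Nat.eqb (x k) 0 end.

Lemma in_I0_spec N x : in_I0 N x = true -> forall j, (j < N)%nat -> x j = 0%nat.
Proof.
  induction N as [|N IH]; simpl; intros H j Hj; [lia|].
  apply andb_prop in H as [H1 H2]; apply Nat.eqb_eq in H2.
  destruct (Nat.eq_dec j N); [now subst | apply IH; auto; lia].
Qed.

Lemma in_I0_ext N x y : (forall j, (j < N)%nat -> x j = y j) -> in_I0 N x = in_I0 N y.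
Proof.
  induction N as [|N IH]; simpl; intros H; [reflexivity|].
  rewrite IH by (intros; apply H; lia); rewrite H by lia; reflexivity.
Qed.

Lemma in_I0_upd N n x j : (N <= n)%nat -> in_I0 N (upd x n j) = in_I0 N x.
Proof.
  intros Hn; apply in_I0_ext; intros i Hi; unfold upd.
  destruct (Nat.eqb_spec i n); [lia | reflexivity].
Qed.

Lemma upd_same x n j : upd x n j n = j.
Proof. unfold upd; now rewrite Nat.eqb_refl. Qed.

Lemma upd_other x n j k : k <> n -> upd x n j k = x k.
Proof. intros Hk; unfold upd; now destruct (Nat.eqb_spec k n). Qed.

Section Vilenkin.
Variable m : nat -> nat.
Hypothesis hm : forall k, (2 <= m k)%nat.

Lemma Mk_S k : Mk m (S k) = (Mk m k * m k)%nat.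
Proof. reflexivity. Qed.

Lemma Mk_gt k : (k < Mk m k)%nat.
Proof.
  induction k as [|k IH]; [unfold Mk; simpl; lia|].
  rewrite Mk_S; pose proof (hm k); nia.
Qed.

Lemma Mk_pos k : (0 < Mk m k)%nat.
Proof. pose proof (Mk_gt k); lia. Qed.

Lemma Mk_lt a b : (a < b)%nat -> (Mk m a < Mk m b)%nat.
Proof.
  induction b as [|b IH]; intros Hab; [lia|]; rewrite Mk_S.
  pose proof (hm b); pose proof (Mk_pos b).
  destruct (Nat.eq_dec a b) as [->|Hne]; [nia|].
  specialize (IH ltac:(lia)); nia.
Qed.

Lemma Mk_multiple a b : (a <= b)%nat -> exists P, Mk m b = (P * Mk m a)%nat.
Proof.
  induction b as [|b IH]; intros Hab.
  - exists 1%nat; replace a with 0%nat by lia; lia.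
  - destruct (Nat.eq_dec a (S b)) as [->|Hne]; [exists 1%nat; lia|].
    destruct (IH ltac:(lia)) as [P HP]; exists (P * m b)%nat; rewrite Mk_S, HP; lia.
Qed.

Lemma Gpoint_pt i : Gpoint m (pt m i).
Proof. intros k; unfold pt, digit; apply Nat.mod_upper_bound; pose proof (hm k); lia. Qed.

Lemma digit_small k N : (k < Mk m N)%nat -> digit m k N = 0%nat.
Proof. intros H; unfold digit; rewrite Nat.div_small by lia; apply Nat.Div0.mod_0_l. Qed.

Lemma digit_Mk N : digit m (Mk m N) N = 1%nat.
Proof.
  unfold digit; rewrite Nat.div_same by (pose proof (Mk_pos N); lia).
  apply Nat.mod_small, hm.
Qed.

Lemma psi_I0 N k x : in_I0 N x = true -> (k <= Mk m N)%nat ->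
  psi m k x = Cpow (rad m N x) (digit m k N).
Proof.
  intros Hx Hk.
  assert (Hprod : forall n, Cprod n (fun j => Cpow (rad m j x) (digit m k j))
    = if Nat.ltb N n then Cpow (rad m N x) (digit m k N) else Defs.C1).
  { induction n as [|n IH]; [reflexivity|]; simpl Cprod; rewrite IH.
    destruct (Nat.ltb_spec N n); destruct (Nat.ltb_spec N (S n)); try lia.
    - rewrite (digit_small k n) by (pose proof (Mk_lt N n); lia); apply Cmul_C1_r.
    - replace n with N by lia; apply Cmul_C1_l.
    - unfold rad; rewrite (in_I0_spec N x Hx n) by lia.
      replace (2 * PI * INR 0 / INR (m n)) with 0 by (simpl; unfold Rdiv; ring).
      now rewrite Cexpi_0, Cpow_C1, Cmul_C1_l. }
  unfold psi; rewrite Hprod; destruct (Nat.ltb_spec N (S k)); [reflexivity|].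
  rewrite digit_small by (pose proof (Mk_gt N); lia); reflexivity.
Qed.

Lemma in_I0_pt N i : in_I0 N (pt m i) = Nat.eqb (i mod Mk m N) 0.
Proof.
  induction N as [|N IH]; [reflexivity|].
  simpl in_I0; rewrite IH, Mk_S; unfold pt, digit.
  pose proof (Mk_pos N); pose proof (hm N).
  rewrite Nat.Div0.mod_mul_r.
  destruct (Nat.eqb_spec (i mod Mk m N) 0); destruct (Nat.eqb_spec ((i / Mk m N) mod m N) 0);
    simpl; symmetry; apply Nat.eqb_eq || apply Nat.eqb_neq; nia.
Qed.

Lemma sum_over_I0 N K Phi : (N < K)%nat ->
  Rsum (Mk m K) (fun i => if Nat.eqb (i mod Mk m N) 0 then Phi (digit m i N) else 0)
  = INR (Mk m K) / (INR (m N) * INR (Mk m N)) * Rsum (m N) Phi.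
Proof.
  intros HNK; destruct (Mk_multiple (S N) K HNK) as [P HP].
  assert (HK : Mk m K = (P * m N * Mk m N)%nat) by (rewrite HP, Mk_S; lia).
  pose proof (Mk_pos N) as HM; pose proof (hm N).
  assert (HM' : INR (Mk m N) <> 0) by (apply not_0_INR; lia).
  assert (HmN : INR (m N) <> 0) by (apply not_0_INR; lia).
  transitivity (INR P * Rsum (m N) Phi).
  - (* i = (q m_N + d) M_N + r, where d is the N-th digit of i and i is in I_N(0) iff r = 0 *)
    rewrite HK, !Rsum_mul_blocks, <- Rsum_const.
    apply Rsum_ext; intros q _; apply Rsum_ext; intros d Hd.
    assert (Hmod : forall r, (r < Mk m N)%nat -> ((q * m N + d) * Mk m N + r) mod Mk m N = r).
    { intros r Hr; rewrite Nat.add_comm, Nat.Div0.mod_add; apply Nat.mod_small; auto. }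
    assert (Hdig : forall r, (r < Mk m N)%nat -> digit m ((q * m N + d) * Mk m N + r) N = d).
    { intros r Hr; unfold digit; rewrite Nat.add_comm, Nat.div_add, Nat.div_small by lia.
      rewrite Nat.add_0_l, Nat.add_comm, Nat.Div0.mod_add; apply Nat.mod_small; auto. }
    rewrite (Rsum_ext _ _ (fun r => if Nat.eqb r 0 then Phi d else 0))
      by (intros r Hr; rewrite Hmod, Hdig by auto; reflexivity).
    apply Rsum_first; lia.
  - rewrite HK, !mult_INR; field; auto.
Qed.

Lemma lint_I0 N K g h : (N < K)%nat ->
  (forall x, Gpoint m x -> h x = if in_I0 N x then g (x N) else 0) ->
  lint m K h = Rsum (m N) g / (INR (m N) * INR (Mk m N)).
Proof.
  intros HNK Hh; unfold lint.
  rewrite (Rsum_ext _ _ (fun i => if Nat.eqb (i mod Mk m N) 0 then g (digit m i N) else 0))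
    by (intros i _; rewrite Hh, in_I0_pt by apply Gpoint_pt; reflexivity).
  rewrite sum_over_I0 by auto.
  pose proof (Mk_pos K); pose proof (Mk_pos N); pose proof (hm N).
  field; repeat split; apply not_0_INR; lia.
Qed.

Lemma Cint_I0 N K g h : (N < K)%nat ->
  (forall x, Gpoint m x -> h x = if in_I0 N x then g (x N) else C0) ->
  Cint m K h = Cscal (/ (INR (m N) * INR (Mk m N))) (Csum (m N) g).
Proof.
  intros HNK Hh.
  assert (Hlint : forall pr : Cx -> R, pr C0 = 0 ->
    Rsum (Mk m K) (fun i => pr (h (pt m i))) / INR (Mk m K)
    = Rsum (m N) (fun d => pr (g d)) / (INR (m N) * INR (Mk m N))).
  { intros pr Hpr; apply (lint_I0 N K (fun d => pr (g d)) (fun x => pr (h x))); auto.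
    intros x Hx; rewrite Hh by auto; now destruct (in_I0 N x). }
  apply Cext; unfold Cint, Cscal; cbn [fst snd]; rewrite ?Csum_fst, ?Csum_snd.
  - transitivity (Rsum (m N) (fun d => fst (g d)) / (INR (m N) * INR (Mk m N)));
      [rewrite <- (Hlint fst) | ]; unfold Rdiv; [ring | reflexivity | ring].
  - transitivity (Rsum (m N) (fun d => snd (g d)) / (INR (m N) * INR (Mk m N)));
      [rewrite <- (Hlint snd) | ]; unfold Rdiv; [ring | reflexivity | ring].
Qed.

Lemma weak_norm_gt_const p N h K B : 0 < p -> 0 < B -> B < K ->
  (forall x, Gpoint m x -> h x = K) -> weak_norm_gt m p N h B.
Proof.
  intros Hp HB HBK Hh; exists ((B + K) / 2); split; [lra|].
  unfold mu_gt; rewrite (Rsum_ext _ _ (fun _ => 1)).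
  - rewrite Rsum_const, !rpow_pos by lra.
    replace (INR (Mk m N) * 1 / INR (Mk m N)) with 1
      by (field; apply not_0_INR; pose proof (Mk_pos N); lia).
    rewrite Rmult_1_r; apply Rlt_Rpower_l; lra.
  - intros i _; rewrite Hh, Rabs_pos_eq by (apply Gpoint_pt || lra).
    destruct (Rlt_dec ((B + K) / 2) K); [reflexivity | lra].
Qed.

Lemma find_level n0 : (3 <= n0)%nat ->
  exists N, (Mk m N + 2 <= n0)%nat /\ (n0 < Mk m (S N) + 2)%nat.
Proof.
  intros H3.
  assert (Hex : forall t, (n0 < Mk m t + 2)%nat ->
    exists N, (Mk m N + 2 <= n0)%nat /\ (n0 < Mk m (S N) + 2)%nat).
  { induction t as [|t IH]; intros Ht; [unfold Mk in Ht; simpl in Ht; lia|].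
    destruct (lt_dec n0 (Mk m t + 2)); [apply IH; auto | exists t; split; lia]. }
  apply (Hex n0); pose proof (Mk_gt n0); lia.
Qed.

End Vilenkin.

Lemma Fsigma_lacunary m (f : nat -> (nat -> nat) -> Cx) M x :
  (forall j, (j < M)%nat -> fhat m f j = C0) ->
  Fsigma m f (M + 2) x = Cscal (/ INR (M + 2)) (Cmul (fhat m f M) (psi m M x)).
Proof.
  intros Hf.
  assert (HS : forall k, (k <= M)%nat -> Spart m f k x = C0).
  { intros k Hk; apply Csum_eq0; intros j Hj; rewrite Hf by lia; apply Cext; simpl; ring. }
  unfold Fsigma; f_equal.
  replace (M + 2)%nat with (S (S M)) by lia; simpl Csum.
  rewrite Csum_eq0, HS by (auto; intros; apply HS; lia).
  unfold Spart at 1; simpl Csum; fold (Spart m f M x); rewrite HS by lia.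
  now rewrite !Cadd_C0_l.
Qed.

Lemma cos_2PI_div_le (a b : nat) : (2 <= a)%nat -> (a <= b)%nat ->
  cos (2 * PI / INR a) <= cos (2 * PI / INR b) /\ cos (2 * PI / INR b) < 1.
Proof.
  intros Ha Hab; pose proof PI_RGT_0.
  assert (INR a >= 2) by (replace 2 with (INR 2) by (simpl; ring); apply Rle_ge, le_INR; auto).
  assert (INR a <= INR b) by (apply le_INR; auto).
  assert (Hb : 0 < 2 * PI / INR b <= PI).
  { split; [apply Rdiv_lt_0_compat; lra|].
    apply Rmult_le_reg_r with (INR b); [lra|]; unfold Rdiv; rewrite Rmult_assoc, Rinv_l; nra. }
  assert (Hba : 2 * PI / INR b <= 2 * PI / INR a).
  { unfold Rdiv; apply Rmult_le_compat_l; [lra|]; apply Rinv_le_contravar; lra. }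
  assert (Ha' : 2 * PI / INR a <= PI).
  { apply Rmult_le_reg_r with (INR a); [lra|]; unfold Rdiv; rewrite Rmult_assoc, Rinv_l; nra. }
  split.
  - destruct (Rle_lt_or_eq_dec _ _ Hba) as [Hlt|Heq]; [|rewrite Heq; lra].
    left; apply cos_decreasing_1; lra.
  - rewrite <- cos_0; apply cos_decreasing_1; lra.
Qed.

Definition dipole (d : nat) : R := match d with O => 1 | S O => -1 | _ => 0 end.

Definition atom (N : nat) (c : R) (x : nat -> nat) : R :=
  if in_I0 N x then c * dipole (x N) else 0.

(* Conditional expectations of the atom vanish up to level N because it has mean zero on
   I_N(0); from level N + 1 on the martingale is the atom itself. *)
Definition atom_mart (N : nat) (c : R) (n : nat) (x : nat -> nat) : Cx :=
  if Nat.ltb N n then (atom N c x, 0) else C0.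

Section Atom.
Variable m : nat -> nat.
Hypothesis hm : forall k, (2 <= m k)%nat.
Variables (N : nat) (c : R).

Lemma atom_mart_martingale : martingale m (atom_mart N c).
Proof.
  split.
  - intros n x y _ _ Hxy; unfold atom_mart, atom.
    destruct (Nat.ltb_spec N n); [|reflexivity].
    rewrite (in_I0_ext N x y) by (intros; apply Hxy; lia); rewrite Hxy by lia; reflexivity.
  - intros n x _; pose proof (hm n).
    unfold atom_mart at 2; destruct (Nat.ltb_spec N (S n)) as [HNn|HNn].
    2: { rewrite Csum_eq0 by reflexivity; unfold atom_mart.
         destruct (Nat.ltb_spec N n); [lia|]; apply Cext; unfold Cscal; simpl; ring. }
    unfold atom_mart; destruct (Nat.ltb_spec N n) as [HNn'|HNn'].
    + assert (Hupd : forall j, atom N c (upd x n j) = atom N c x).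
      { intros j; unfold atom; rewrite in_I0_upd, upd_other by lia; reflexivity. }
      rewrite (Csum_ext _ _ (fun _ => (atom N c x, 0)))
        by (intros j _; now rewrite Hupd).
      symmetry; apply Cscal_avg_const; lia.
    + replace n with N by lia.
      rewrite Csum_first_two by (auto; intros d Hd; unfold atom;
        rewrite upd_same; destruct d as [|[|d]]; try lia; simpl; destruct (in_I0 N _);
        apply Cext; simpl; ring).
      unfold atom; rewrite !in_I0_upd, !upd_same by lia.
      apply Cext; unfold Cscal, Cadd; simpl; destruct (in_I0 N x); ring.
Qed.

Lemma atom_mart_Hp p : 0 < c -> rpow c p = INR (Mk m N) -> Hp_norm_le m p (atom_mart N c) 1.
Proof.
  intros Hc Hcp K; rewrite rpow_1.
  assert (Hmax : forall x, Rmaxupto K (fun n => Cabs (atom_mart N c n x))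
                           = Cabs (atom_mart N c K x)).
  { intros x; apply Rmaxupto_last; intros n Hn; unfold atom_mart.
    destruct (Nat.ltb_spec N n); destruct (Nat.ltb_spec N K);
      try lia; rewrite ?Cabs_C0; solve [lra | apply Cabs_nonneg]. }
  destruct (le_lt_dec K N) as [HK|HK].
  - unfold lint; rewrite Rsum_eq0; [unfold Rdiv; rewrite Rmult_0_l; lra|].
    intros i _; rewrite Hmax; unfold atom_mart.
    destruct (Nat.ltb_spec N K); [lia|]; rewrite Cabs_C0; apply rpow_0.
  - rewrite (lint_I0 m hm N K (fun d => rpow (Rabs (c * dipole d)) p)); auto.
    + rewrite Rsum_first_two by (auto; intros d Hd; destruct d as [|[|d]]; try lia;
        simpl; rewrite Rmult_0_r, Rabs_R0; apply rpow_0).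
      simpl dipole; rewrite Rmult_1_r, Rabs_pos_eq by lra.
      replace (c * -1) with (- c) by ring; rewrite Rabs_Ropp, Rabs_pos_eq, Hcp by lra.
      pose proof (hm N); pose proof (Mk_pos m hm N).
      assert (INR (m N) >= 2) by (replace 2 with (INR 2) by (simpl; ring); apply Rle_ge, le_INR; auto).
      assert (INR (Mk m N) > 0) by (apply lt_0_INR; lia).
      replace ((INR (Mk m N) + INR (Mk m N)) / (INR (m N) * INR (Mk m N))) with (2 / INR (m N))
        by (field; lra).
      apply Rmult_le_reg_r with (INR (m N)); [lra|]; unfold Rdiv; rewrite Rmult_assoc, Rinv_l; lra.
    + intros x _; rewrite Hmax; unfold atom_mart; destruct (Nat.ltb_spec N K); [|lia].
      rewrite Cabs_real; unfold atom; destruct (in_I0 N x); [reflexivity|].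
      rewrite Rabs_R0; apply rpow_0.
Qed.

Lemma fhat_atom k : (N <= k)%nat -> (k <= Mk m N)%nat ->
  fhat m (atom_mart N c) k
  = Cscal (/ (INR (m N) * INR (Mk m N)))
      (Cadd (c, 0) (Cmul (- c, 0) (Cconj (Cpow (Cexpi (2 * PI / INR (m N))) (digit m k N))))).
Proof.
  intros HNk HkM; unfold fhat.
  rewrite (Cint_I0 m hm N (S k)
    (fun d => Cmul (c * dipole d, 0) (Cconj (Cpow (Cexpi (2 * PI * INR d / INR (m N))) (digit m k N))))).
  - rewrite Csum_first_two by (auto; intros d Hd; destruct d as [|[|d]]; try lia;
      apply Cext; simpl; ring).
    replace (2 * PI * INR 0 / INR (m N)) with 0 by (simpl; unfold Rdiv; ring).
    replace (2 * PI * INR 1 / INR (m N)) with (2 * PI / INR (m N)) by (simpl; unfold Rdiv; ring).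
    rewrite Cexpi_0, Cpow_C1; simpl dipole.
    f_equal; f_equal; [apply Cext; simpl; ring | f_equal; f_equal; ring].
  - lia.
  - intros x _; unfold atom_mart; destruct (Nat.ltb_spec N (S k)); [|lia].
    unfold atom; destruct (in_I0 N x) eqn:Hx.
    + rewrite (psi_I0 m hm N) by auto; reflexivity.
    + apply Cext; simpl; ring.
Qed.

Lemma fhat_atom_small k : (k < Mk m N)%nat -> fhat m (atom_mart N c) k = C0.
Proof.
  intros Hk; destruct (le_lt_dec N k) as [HNk|HkN].
  - rewrite fhat_atom, digit_small by (auto; lia); simpl Cpow.
    apply Cext; simpl; ring.
  - unfold fhat, Cint; rewrite Csum_eq0.
    + apply Cext; simpl; ring.
    + intros i _; unfold atom_mart; destruct (Nat.ltb_spec N (S k)); [lia|].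
      apply Cext; simpl; ring.
Qed.

Lemma fhat_atom_Mk_fst :
  fst (fhat m (atom_mart N c) (Mk m N))
  = c * (1 - cos (2 * PI / INR (m N))) / (INR (m N) * INR (Mk m N)).
Proof.
  pose proof (Mk_gt m hm N).
  rewrite fhat_atom, digit_Mk by (auto; lia); simpl; unfold Rdiv; ring.
Qed.

Lemma Fsigma_atom_abs x :
  Cabs (Fsigma m (atom_mart N c) (Mk m N + 2) x)
  = Cabs (fhat m (atom_mart N c) (Mk m N)) / INR (Mk m N + 2).
Proof.
  rewrite Fsigma_lacunary by (intros; apply fhat_atom_small; auto).
  rewrite Cabs_scal, Cabs_mul, Cabs_psi, Rabs_pos_eq.
  - unfold Rdiv; ring.
  - apply Rlt_le, Rinv_0_lt_compat, lt_0_INR; lia.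
Qed.

Lemma fhat_atom_Mk_ge (b : nat) : 0 <= c -> (m N <= b)%nat ->
  c * (1 - cos (2 * PI / INR b)) / (INR b * INR (Mk m N))
  <= Cabs (fhat m (atom_mart N c) (Mk m N)).
Proof.
  intros Hc Hb.
  eapply Rle_trans; [|apply Rle_trans with (1 := Rle_abs _), Cabs_fst_le].
  rewrite fhat_atom_Mk_fst.
  destruct (cos_2PI_div_le (m N) b (hm N) Hb) as [Hcos Hcos1].
  pose proof (hm N); pose proof (Mk_pos m hm N).
  assert (INR (m N) <= INR b) by (apply le_INR; auto).
  assert (0 < INR (m N)) by (apply lt_0_INR; lia).
  assert (0 < INR (Mk m N)) by (apply lt_0_INR; lia).
  unfold Rdiv; apply Rmult_le_compat.
  - apply Rmult_le_pos; lra.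
  - apply Rlt_le, Rinv_0_lt_compat; nra.
  - apply Rmult_le_compat_l; lra.
  - apply Rinv_le_contravar; nra.
Qed.

(* The factor 3 absorbs M_N + 2 <= 3 M_N. *)
Lemma Fsigma_atom_ratio_gt (b : nat) (al B ph : R) :
  (m N <= b)%nat -> 0 < B -> 1 <= ph ->
  c = Rpower (INR (Mk m N)) al * INR (Mk m N) ^ 2 ->
  3 * B * INR b / (1 - cos (2 * PI / INR b)) * ph < Rpower (INR (Mk m N)) al ->
  B < Cabs (fhat m (atom_mart N c) (Mk m N)) / INR (Mk m N + 2) / ph.
Proof.
  intros Hb HB Hph Hc Hscale.
  set (M := INR (Mk m N)) in *; set (A := Rpower M al) in *.
  set (dl := 1 - cos (2 * PI / INR b)) in *.
  assert (HM : 1 <= M) by (apply (le_INR 1), Mk_pos, hm).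
  assert (HA : 0 < A) by apply exp_pos.
  assert (Hb2 : 2 <= INR b)
    by (replace 2 with (INR 2) by (simpl; ring); apply le_INR; pose proof (hm N); lia).
  assert (Hdl : 0 < dl) by (pose proof (cos_2PI_div_le b b ltac:(pose proof (hm N); lia) (le_n _));
                            unfold dl; lra).
  pose proof (fhat_atom_Mk_ge b ltac:(rewrite Hc; simpl; nra) Hb) as HF.
  set (F := Cabs (fhat m (atom_mart N c) (Mk m N))) in *.
  rewrite Hc in HF; fold M dl in HF.
  replace (A * M ^ 2 * dl / (INR b * M)) with (A * dl * M / INR b) in HF by (field; lra).
  replace (INR (Mk m N + 2)) with (M + 2) by (unfold M; rewrite plus_INR; simpl; ring).
  assert (HAdl : 3 * B * INR b * ph < A * dl).
  { apply Rmult_lt_reg_r with (/ dl); [apply Rinv_0_lt_compat; lra|].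
    replace (A * dl * / dl) with A by (field; lra); unfold Rdiv in Hscale; lra. }
  assert (HBF : B * (M + 2) * ph < F).
  { apply Rlt_le_trans with (2 := HF), Rmult_lt_reg_r with (INR b); [lra|].
    replace (A * dl * M / INR b * INR b) with (A * dl * M) by (field; lra).
    assert (0 < B * ph * INR b) by (apply Rmult_lt_0_compat; nra).
    assert (3 * B * INR b * ph * M < A * dl * M) by (apply Rmult_lt_compat_r; lra).
    nra. }
  apply Rmult_lt_reg_r with ((M + 2) * ph); [nra|].
  replace (F / (M + 2) / ph * ((M + 2) * ph)) with F by (field; lra).
  rewrite <- Rmult_assoc; lra.
Qed.

End Atom.

(* n0 lies in the block [M_N + 2, M_(N+1) + 2) and M_(N+1) <= Bm M_N, so (n0 + 1)^al is at
   most (Bm + 2)^al M_N^al, while phi (M_N + 2) <= phi n0. *)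
Lemma limsup_along_Mk m Bm al (phi : nat -> R) :
  (forall k, (2 <= m k)%nat) -> (forall k, (m k <= Bm)%nat) -> 0 < al ->
  (forall n, 1 <= phi n) -> (forall n1 n2, (n1 <= n2)%nat -> phi n1 <= phi n2) ->
  (forall B N, exists n, (N <= n)%nat /\ rpow (INR n + 1) al / phi n > B) ->
  forall C, 0 < C -> exists N, C * phi (Mk m N + 2)%nat < Rpower (INR (Mk m N)) al.
Proof.
  intros hm HBm Hal Hphi Hmono Hlim C HC.
  set (Q := Rpower (INR Bm + 2) al).
  assert (HQ : 0 < Q) by apply exp_pos.
  destruct (Hlim (C * Q) 3%nat) as [n0 [Hn0 Hn0Q]].
  destruct (find_level m hm n0 Hn0) as [N [HN1 HN2]].
  exists N; set (M := INR (Mk m N)).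
  assert (HM : 1 <= M) by (apply (le_INR 1), Mk_pos, hm).
  pose proof (pos_INR n0); pose proof (Hphi n0).
  assert (Hlevel : INR n0 + 1 <= (INR Bm + 2) * M).
  { assert (Hnext : INR n0 + 1 <= INR (Mk m (S N)) + 2).
    { replace 2 with (INR 2) by (simpl; ring); rewrite <- S_INR, <- plus_INR; apply le_INR; lia. }
    rewrite Mk_S, mult_INR in Hnext; fold M in Hnext.
    assert (INR (m N) <= INR Bm) by (apply le_INR; auto); nra. }
  assert (Hpow : rpow (INR n0 + 1) al <= Q * Rpower M al).
  { rewrite rpow_pos by lra; unfold Q; rewrite Rpower_mult_distr by (pose proof (pos_INR Bm); lra).
    apply Rle_Rpower_l; lra. }
  assert (Hphi0 : phi (Mk m N + 2)%nat <= phi n0) by (apply Hmono; lia).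
  assert (HQphi : C * Q * phi n0 < rpow (INR n0 + 1) al).
  { apply Rmult_lt_reg_r with (/ phi n0); [apply Rinv_0_lt_compat; lra|].
    rewrite Rmult_assoc, Rinv_r by lra; unfold Rdiv in Hn0Q; lra. }
  apply Rmult_lt_reg_l with Q; [auto|].
  assert (C * phi (Mk m N + 2)%nat <= C * phi n0) by (apply Rmult_le_compat_l; lra).
  nra.
Qed.

Theorem theorem2 (m : nat -> nat) (p : R) (phi : nat -> R) :
  bounded_generating m ->
  0 < p < 1 / 2 ->
  (forall n, 1 <= phi n) ->
  (forall n1 n2, (n1 <= n2)%nat -> phi n1 <= phi n2) ->
  (* limsup (n+1)^{1/p-2} / phi n = +oo *)
  (forall B : R, forall N : nat, exists n, (N <= n)%nat /\
       rpow (INR n + 1) (1 / p - 2) / phi n > B) ->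
  (* sup_{||f||_{H_p} <= 1} sup_{n >= 1} || sigma_n f / phi n ||_{L_{p,oo}} = +oo *)
  forall B : R, 0 < B ->
    exists f : nat -> (nat -> nat) -> Cx,
      martingale m f /\ Hp_norm_le m p f 1 /\
      exists n : nat, (1 <= n)%nat /\
        weak_norm_gt m p n (fun x => Cabs (Fsigma m f n x) / phi n) B.
Proof.
  intros [hm [Bm HBm]] Hp Hphi Hmono Hlim B HB.
  assert (Hal : 0 < 1 / p - 2).
  { replace (1 / p - 2) with ((1 - 2 * p) / p) by (field; lra); apply Rdiv_lt_0_compat; lra. }
  assert (HBm2 : (2 <= Bm)%nat) by (specialize (hm 0%nat); specialize (HBm 0%nat); lia).
  assert (HC : 0 < 3 * B * INR Bm / (1 - cos (2 * PI / INR Bm))).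
  { pose proof (cos_2PI_div_le Bm Bm HBm2 (le_n _)); pose proof (lt_0_INR Bm ltac:(lia)).
    apply Rdiv_lt_0_compat; [nra | lra]. }
  destruct (limsup_along_Mk m Bm _ phi hm HBm Hal Hphi Hmono Hlim _ HC) as [N HN].
  set (M := INR (Mk m N)) in HN.
  set (c := Rpower M (1 / p)).
  exists (atom_mart N c); split; [apply atom_mart_martingale; auto|].
  split.
  { apply atom_mart_Hp; [auto | apply exp_pos |].
    rewrite rpow_pos by apply exp_pos; unfold c; rewrite Rpower_mult.
    replace (1 / p * p) with 1 by (field; lra); apply Rpower_1, lt_0_INR, Mk_pos, hm. }
  exists (Mk m N + 2)%nat; split; [lia|].
  apply (weak_norm_gt_const m hm p _ _
           (Cabs (fhat m (atom_mart N c) (Mk m N)) / INR (Mk m N + 2) / phi (Mk m N + 2)%nat));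
    [lra | lra | | intros x _; now rewrite Fsigma_atom_abs].
  apply (Fsigma_atom_ratio_gt m hm N c Bm (1 / p - 2)); auto.
  unfold c; replace (1 / p) with (1 / p - 2 + INR 2) at 1 by (simpl; ring).
  rewrite Rpower_plus, Rpower_pow; [reflexivity|]; apply lt_0_INR, Mk_pos, hm.
Qed.
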